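(* Let $s\ge 2$ and $1\le t\le s-1$ be integers and let $a_1,\dots,a_t$ be positive integers. Then, as $z\to\infty$ (with implied constants depending only on $s,t,a_1,\dots,a_t$): (i) $$\sum_{\substack{x_1,\dots,x_t\ge 1\\ a_1x_1+\cdots+a_tx_t=z}}(x_1\cdots x_t)^{-1+1/s}\ll z^{-1+t/s};$$ (ii) $$\sum_{\substack{x_1,\dots,x_t\ge 1\\ a_1x_1+\cdots+a_tx_t<z}}(x_1\cdots x_t)^{-1+1/s}\big(z-(a_1x_1+\cdots+a_tx_t)\big)^{-2t/s}\ll z^{-1/s}\log z.$$
   Context: The variables $x_1,\dots,x_t$ range over positive integers. *)

From HB Require Import structures.
From mathcomp Require Import all_boot all_order all_algebra.
From mathcomp Require Import all_classical all_reals all_analysis.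
Set Implicit Arguments. Unset Strict Implicit. Unset Printing Implicit Defensive.
Import Order.TTheory GRing.Theory Num.Theory.
Local Open Scope ring_scope.

Definition wsum (t z : nat) (a : 'I_t -> nat) (x : {ffun 'I_t -> 'I_z.+1}) : nat :=
  (\sum_(i < t) a i * x i)%N.

(* Sum (i): over x_1..x_t >= 1 with a.x = z.  Since a_i >= 1 every x_i <= z,
   so ranging x_i over {0..z} loses no term. *)
Definition S1 (R : realType) (s t : nat) (a : 'I_t -> nat) (z : nat) : R :=
  \sum_(x : {ffun 'I_t -> 'I_z.+1} | [forall i, (0 < x i)%N] && (wsum a x == z))
     (\prod_(i < t) ((x i : nat)%:R : R)) `^ (-1 + s%:R^-1).

Definition S2 (R : realType) (s t : nat) (a : 'I_t -> nat) (z : nat) : R :=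
  \sum_(x : {ffun 'I_t -> 'I_z.+1} | [forall i, (0 < x i)%N] && (wsum a x < z)%N)
     ((\prod_(i < t) ((x i : nat)%:R : R)) `^ (-1 + s%:R^-1)
      * (z%:R - (wsum a x)%:R : R) `^ (- (2 * t%:R / s%:R))).

From HB Require Import structures.
From mathcomp Require Import all_boot all_order all_algebra.
From mathcomp Require Import all_classical all_reals all_analysis.
From mathcomp Require Import ring lra zify.
Import Order.TTheory GRing.Theory Num.Theory.
Local Open Scope ring_scope.

(* Let A = a_1 + ... + a_t and e = 1/s - 1 <= 0.  In every tuple the largest
   coordinate satisfies x_j >= (a.x)/A, so x_j^e <= ((a.x)/A)^e.  Replacing x_j
   by the slack z - a.x is injective on tuples with a.x <= z, so what remains is
   bounded by (sum_{k<=z} h k) * (sum_{k<=z} k^e)^(t-1), and sum_{k<=z} k^e <=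
   s z^(1/s) by concavity of the s-th root.  For (i), a.x = z and h is the
   indicator of 0.  For (ii), h k = k^(-2t/s), whose sum is
   O(z^(1-(t+1)/s) log z); tuples with slack at least z/2 are instead bounded
   directly through (z/2)^(-2t/s). *)

Lemma subrXX_le (R : realFieldType) (u v : R) n : 0 <= v -> v <= u ->
  u ^+ n.+1 - v ^+ n.+1 <= n.+1%:R * (u - v) * u ^+ n.
Proof.
move=> v0 vu; have u0 : 0 <= u by apply: le_trans vu.
rewrite subrXX mulrC [in X in _ <= X]mulrAC ler_wpM2r ?subr_ge0 // mulr_natl.
rewrite -[n.+1 in X in _ <= X]card_ord -sumr_const; apply: ler_sum => i _.
have -> : u ^+ n = u ^+ (n - i) * u ^+ i by rewrite -exprD subnK // -ltnS.
by rewrite ler_wpM2l ?exprn_ge0 ?lerXn2r.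
Qed.

Section PowerBounds.
Variable R : realType.
Implicit Types (x y r : R) (n s z : nat).

Lemma le0_ger_powR x y r : 0 < x -> x <= y -> r <= 0 -> y `^ r <= x `^ r.
Proof.
move=> x0 xy r0; have y0 : 0 < y by apply: lt_le_trans xy.
rewrite -[r]opprK !(powRN _ (- r)) lef_pV2 ?posrE ?powR_gt0 //.
by apply: ge0_ler_powR; rewrite ?nnegrE ?oppr_ge0 // ltW.
Qed.

Lemma exprn_powR x r n : (x `^ r) ^+ n = x `^ (r * n%:R).
Proof. by rewrite -powR_mulrn ?powR_ge0 // powRrM. Qed.

Lemma natr_powRD z r r' : (0 < z)%N ->
  (z%:R : R) `^ r * z%:R `^ r' = z%:R `^ (r + r').
Proof. by move=> z0; rewrite powRD // pnatr_eq0 -lt0n z0 implybT. Qed.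

Lemma powRVnK s x : (0 < s)%N -> 0 <= x -> (x `^ s%:R^-1) ^+ s = x.
Proof.
by move=> s0 x0; rewrite exprn_powR mulVf ?powRr1 // pnatr_eq0 -lt0n.
Qed.

(* Concavity of the s-th root, via u^s - v^s <= s (u - v) u^(s-1). *)
Lemma powR_root_step s n : (0 < s)%N ->
  (n.+1%:R : R) `^ (-1 + s%:R^-1) <= s%:R * (n.+1%:R `^ s%:R^-1 - n%:R `^ s%:R^-1).
Proof.
case: s => // m _.
set u := (n.+1%:R : R) `^ m.+1%:R^-1; set v := (n%:R : R) `^ m.+1%:R^-1.
have u0 : 0 < u by rewrite powR_gt0 // ltr0n.
have vu : v <= u by apply: ge0_ler_powR; rewrite ?nnegrE ?invr_ge0 ?ler0n ?ler_nat.
have us : u ^+ m.+1 = n.+1%:R by rewrite powRVnK ?ler0n.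
have vs : v ^+ m.+1 = n%:R by rewrite powRVnK ?ler0n.
have -> : (n.+1%:R : R) `^ (-1 + m.+1%:R^-1) = (u ^+ m)^-1.
  rewrite powRD ?pnatr_eq0 ?implybT // powR_inv1 ?ler0n // -/u -us exprS.
  by rewrite invfM mulrAC mulVf ?mul1r // gt_eqF.
rewrite -[(u ^+ m)^-1]mul1r ler_pdivrMr ?exprn_gt0 //.
have := @subrXX_le _ u v m (powR_ge0 _ _ : 0 <= v) vu.
by rewrite us vs -natr1 addrAC subrr add0r.
Qed.

Lemma sum_powR_root_le s z : (1 < s)%N ->
  \sum_(k < z.+1) (k%:R : R) `^ (-1 + s%:R^-1) <= s%:R * z%:R `^ s%:R^-1.
Proof.
move=> s1; have s0 : (0 < s)%N by apply: ltnW.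
have e0 : (-1 + s%:R^-1 : R) != 0.
  by rewrite addrC subr_eq0 invr_eq1 pnatr_eq1; case: s s1 {s0} => [|[]].
elim: z => [|z IH].
  by rewrite big_ord1 /= !powR0 ?mulr0 // invr_eq0 pnatr_eq0 -lt0n.
rewrite big_ord_recr /=; apply: le_trans (lerD IH (@powR_root_step s z s0)) _.
by rewrite -mulrDr addrCA subrr addr0.
Qed.

Lemma harmonic_le_ln n : \sum_(k < n.+2) (k%:R : R)^-1 <= 1 + ln n.+1%:R.
Proof.
elim: n => [|n IH].
  by rewrite !big_ord_recr big_ord0 /= add0r invr0 add0r ln1 addr0 invr1.
have ln_step : (n.+2%:R : R)^-1 <= ln n.+2%:R - ln n.+1%:R.
  have n2 : (0 : R) < n.+2%:R by rewrite ltr0n.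
  have := @le_ln1Dx R (- n.+2%:R^-1); rewrite ltrN2 invf_lt1 ?ltr1n // => /(_ isT).
  have -> : 1 - (n.+2%:R : R)^-1 = n.+1%:R / n.+2%:R.
    by rewrite -[n.+2%:R]natr1; field; rewrite gt_eqF.
  by rewrite ln_div ?posrE ?ltr0n // lerNr opprB.
rewrite big_ord_recr /=; apply: le_trans (lerD IH ln_step) _; lra.
Qed.

Lemma ln_natr_ge1 z : (4 <= z)%N -> 1 <= ln (z%:R : R).
Proof.
move=> z4; have ln2 : (2^-1 : R) <= ln 2.
  have := @le_ln1Dx R (- 2^-1).
  have -> : (1 - 2^-1 : R) = 2^-1 by lra.
  rewrite lnV ?posrE //; lra.
have ln4 : ln (4 : R) = ln 2 *+ 2 by rewrite -lnXn // expr2; congr ln; lra.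
have : ln (4 : R) <= ln z%:R.
  by rewrite ler_ln ?posrE ?ltr0n ?(leq_trans _ z4) // (ler_nat R 4 z).
rewrite ln4 mulr2n; lra.
Qed.

(* [d != 0] makes the k = 0 term [0 `^ (- d)] vanish. *)
Lemma sum_powR_le_ln (c d : R) z : c <= 1 -> c <= d -> d != 0 -> (0 < z)%N ->
  \sum_(k < z.+1) (k%:R : R) `^ (- d) <= z%:R `^ (1 - c) * (1 + ln z%:R).
Proof.
move=> c1 cd d0; case: z => // n _.
apply: (@le_trans _ _ (\sum_(k < n.+2) n.+1%:R `^ (1 - c) * k%:R^-1)); last first.
  by rewrite -mulr_sumr ler_wpM2l ?powR_ge0 // harmonic_le_ln.
apply: ler_sum => -[[|k] kn] _ /=; first by rewrite powR0 ?oppr_eq0 // invr0 mulr0.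
apply: (@le_trans _ _ (k.+1%:R `^ (- c))); first by rewrite ler_powR ?ler1n ?lerN2.
have -> : k.+1%:R `^ (- c) = k.+1%:R `^ (1 - c) * (k.+1%:R : R)^-1.
  by rewrite -powR_inv1 ?ler0n // -powRD ?pnatr_eq0 ?implybT //; congr powR; ring.
rewrite ler_wpM2r ?invr_ge0 ?ler0n //.
by apply: ge0_ler_powR; rewrite ?nnegrE ?subr_ge0 ?ler0n ?ler_nat.
Qed.
End PowerBounds.

Lemma sumr_le_predT {T : finType} {R : numDomainType} (P : pred T) (G : T -> R) :
  (forall x, 0 <= G x) -> \sum_(x | P x) G x <= \sum_x G x.
Proof. by move=> G0; rewrite [X in _ <= X](bigID P) /= lerDl sumr_ge0. Qed.

Lemma sumr_inj_le {T U : finType} {R : numDomainType} (P : pred T) (phi : T -> U)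
    (G : U -> R) : {in P &, injective phi} -> (forall u, 0 <= G u) ->
  \sum_(x | P x) G (phi x) <= \sum_u G u.
Proof.
move=> phi_inj G0; rewrite (eq_bigl (mem P)) // -(big_imset _ phi_inj).
exact: sumr_le_predT.
Qed.

Lemma prod_powR (R : realType) (I : Type) (s : seq I) (P : pred I) (F : I -> R) r :
  (forall i, P i -> 0 <= F i) ->
  (\prod_(i <- s | P i) F i) `^ r = \prod_(i <- s | P i) F i `^ r.
Proof.
move=> F0; elim: s => [|i s IH]; first by rewrite !big_nil powR1.
rewrite !big_cons; case: ifP => // Pi.
by rewrite powRM ?IH ?F0 // prodr_ge0.
Qed.

Section Slack.
Context {R : realType} {t z : nat} {a : 'I_t -> nat}.
Hypothesis a_gt0 : forall i, (0 < a i)%N.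
Local Notation point := {ffun 'I_t -> 'I_z.+1}.

Definition put_slack (j : 'I_t) (x : point) : point :=
  [ffun i => if i == j then inord (z - wsum a x) else x i].

Lemma wsum_bigD1 j (x : point) :
  wsum a x = (a j * x j + \sum_(i < t | i != j) a i * x i)%N.
Proof. exact: bigD1. Qed.

Lemma put_slack_inj {P : pred point} j : (forall x, P x -> wsum a x <= z)%N ->
  {in P &, injective (put_slack j)}.
Proof.
move=> Pz x1 x2 P1 P2 e.
have coord i : put_slack j x1 i = put_slack j x2 i by rewrite e.
have off i : i != j -> x1 i = x2 i by move=> ij; have := coord i; rewrite !ffunE (negbTE ij).
have w12 : wsum a x1 = wsum a x2.
  have := congr1 val (coord j); rewrite !ffunE eqxx /= !inordK ?ltnS ?leq_subr //.
  by have := Pz _ P1; have := Pz _ P2; lia.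
have rest : (\sum_(i < t | i != j) a i * x1 i = \sum_(i < t | i != j) a i * x2 i)%N.
  by apply: eq_bigr => i /off ->.
move: w12; rewrite !(wsum_bigD1 j) rest => /addIn /eqP; rewrite eqn_pmul2l // => /eqP xj.
by apply/ffunP => i; case: (eqVneq i j) => [->|/off]; first exact: val_inj.
Qed.

Lemma sum_prod_le (P : pred point) (f : nat -> R) : (forall k, 0 <= f k) ->
  \sum_(x | P x) \prod_i f (x i) <= (\sum_(k < z.+1) f k) ^+ t.
Proof.
move=> f0; apply: le_trans (sumr_le_predT _ _ _) _ => [x|]; first exact: prodr_ge0.
by rewrite -(bigA_distr_bigA (fun i (k : 'I_z.+1) => f k)) prodr_const card_ord.
Qed.

(* Replacing the j-th coordinate by the slack z - a.x turns the sum into part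
   of a free product of one-dimensional sums. *)
Lemma sum_slack_prod_le (P : pred point) (f h : nat -> R) j :
  (forall x, P x -> wsum a x <= z)%N -> (forall k, 0 <= f k) -> (forall k, 0 <= h k) ->
  \sum_(x | P x) h (z - wsum a x)%N * \prod_(i | i != j) f (x i) <=
  (\sum_(k < z.+1) h k) * (\sum_(k < z.+1) f k) ^+ t.-1.
Proof.
move=> Pz f0 h0.
pose F i (k : 'I_z.+1) := if i == j then h k else f k.
have slackE x : h (z - wsum a x)%N * \prod_(i | i != j) f (x i)
    = \prod_i F i (put_slack j x i).
  rewrite [RHS](bigD1 j) //= /F ffunE eqxx inordK ?ltnS ?leq_subr //.
  by congr (_ * _); apply: eq_bigr => i /negbTE ij; rewrite ffunE ij.
under eq_bigr do rewrite slackE.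
apply: le_trans (sumr_inj_le _ _ (fun y : point => \prod_i F i (y i))
  (put_slack_inj j Pz) _) _.
  by move=> y; apply: prodr_ge0 => i _; rewrite /F; case: ifP.
rewrite -bigA_distr_bigA (bigD1 j) //= {1}/F eqxx ler_wpM2l ?sumr_ge0 //.
rewrite (eq_bigr (fun=> \sum_(k < z.+1) f k)); last first.
  by move=> i /negbTE ij; apply: eq_bigr => k _; rewrite /F ij.
by rewrite (eq_bigl (mem (predC1 j))) // prodr_const cardC1 card_ord.
Qed.

Lemma sum_slack_le (P : pred point) (f h : nat -> R) :
  (forall x, P x -> wsum a x <= z)%N -> (forall k, 0 <= f k) -> (forall k, 0 <= h k) ->
  \sum_(x | P x) \sum_j h (z - wsum a x)%N * \prod_(i | i != j) f (x i) <=
  t%:R * ((\sum_(k < z.+1) h k) * (\sum_(k < z.+1) f k) ^+ t.-1).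
Proof.
move=> Pz f0 h0; rewrite exchange_big /=.
apply: le_trans (ler_sum _ (fun j _ => sum_slack_prod_le P f h j Pz f0 h0)) _.
by rewrite sumr_const card_ord mulr_natl.
Qed.

Lemma exists_wsum_le_max (x : point) : (0 < t)%N ->
  exists j, (wsum a x <= (\sum_i a i) * x j)%N.
Proof.
move=> t0; have [j _ jmax] := @arg_maxnP _ (Ordinal t0) predT (fun i => val (x i)) isT.
exists j; rewrite /wsum big_distrl /=; apply: leq_sum => i _.
exact: leq_mul (leqnn _) (jmax i isT).
Qed.

(* The largest coordinate x_j satisfies c A <= a.x <= A x_j. *)
Lemma prod_powR_le_max (e c : R) (x : point) : (0 < t)%N -> e <= 0 -> 0 < c ->
  c * (\sum_i a i)%N%:R <= (wsum a x)%:R ->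
  \prod_i (x i)%:R `^ e <= c `^ e * \sum_j \prod_(i | i != j) ((x i)%:R : R) `^ e.
Proof.
move=> t0 e0 c0 cw; have [j wj] := exists_wsum_le_max x t0.
have A0 : (0 < \sum_i a i)%N by rewrite (bigD1 (Ordinal t0)) //= ltn_addr.
have cxj : c <= (x j)%:R.
  rewrite -(ler_pM2r (_ : 0 < (\sum_i a i)%N%:R)) ?ltr0n //.
  by apply: le_trans cw _; rewrite mulrC -natrM ler_nat.
rewrite (bigD1 j) //= [X in _ <= _ * X](bigD1 j) //= mulrDr.
rewrite -[X in X <= _]addr0 lerD ?mulr_ge0 ?powR_ge0 ?sumr_ge0 //; last first.
  by move=> i _; rewrite prodr_ge0 // => k _; rewrite powR_ge0.
by rewrite ler_wpM2r ?le0_ger_powR // prodr_ge0 // => k _; rewrite powR_ge0.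
Qed.
End Slack.

Section Bounds.
Variables (R : realType) (s t : nat) (a : 'I_t.+1 -> nat).
Hypotheses (s_gt1 : (1 < s)%N) (a_gt0 : forall i, (0 < a i)%N).

Let e : R := -1 + s%:R^-1.
Let A := (\sum_i a i)%N.
Let f (k : nat) : R := k%:R `^ e.

Let s_gt0 : (0 < s)%N. Proof. exact: ltnW. Qed.
Let e_le0 : e <= 0.
Proof. by rewrite /e addrC subr_le0 invf_le1 ?ltr0n // ler1n. Qed.
Let A_gt0 : (0 < A)%N.
Proof. by rewrite /A (bigD1 ord0) //= ltn_addr. Qed.
Let f_ge0 k : 0 <= f k. Proof. exact: powR_ge0. Qed.

Let sum_f_ge0 z : 0 <= \sum_(k < z.+1) f k.
Proof. by apply: sumr_ge0 => k _; exact: f_ge0. Qed.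

Let sum_f_le z : \sum_(k < z.+1) f k <= s%:R * z%:R `^ s%:R^-1.
Proof. exact: sum_powR_root_le. Qed.

Lemma S1_le z : (0 < z)%N ->
  @S1 R s t.+1 a z <=
  t.+1%:R * A%:R^-1 `^ e * s%:R ^+ t * z%:R `^ (-1 + t.+1%:R / s%:R).
Proof.
move=> z_gt0; pose P (x : {ffun 'I_t.+1 -> 'I_z.+1}) := [forall i, 0 < x i]%N && (wsum a x == z).
pose h (k : nat) : R := (k == 0)%:R.
have term x : P x -> \prod_i f (x i) <=
    (z%:R / A%:R) `^ e * \sum_j h (z - wsum a x)%N * \prod_(i | i != j) f (x i).
  move=> /andP[_ /eqP wz]; rewrite wz subnn -mulr_sumr mul1r.
  by apply: prod_powR_le_max; rewrite ?divr_gt0 ?ltr0n // wz mulfVK ?pnatr_eq0 -?lt0n.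
have sum_h : \sum_(k < z.+1) h k = 1 by rewrite big_ord_recl /h /= big1 ?addr0.
have wz x : P x -> (wsum a x <= z)%N by move=> /andP[_ /eqP ->].
rewrite /S1 (eq_bigr (fun x : {ffun 'I_t.+1 -> 'I_z.+1} => \prod_i f (x i))); last first.
  by move=> x _; rewrite prod_powR // => i _; exact: ler0n.
apply: le_trans (ler_sum _ term) _; rewrite -mulr_sumr.
apply: le_trans (ler_wpM2l (powR_ge0 _ _)
  (sum_slack_le a_gt0 P f h wz f_ge0 (fun k => ler0n R _))) _.
rewrite sum_h mul1r /=.
apply: le_trans (ler_wpM2l (powR_ge0 _ _) (ler_wpM2l (ler0n _ _)
  (lerXn2r _ _ _ (sum_f_le z)))) _; rewrite ?nnegrE ?sum_f_ge0 ?mulr_ge0 ?powR_ge0 //.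
rewrite powRM ?invr_ge0 ?ler0n // exprMn exprn_powR.
have -> : (z%:R : R) `^ (-1 + t.+1%:R / s%:R) = z%:R `^ e * z%:R `^ (s%:R^-1 * t%:R).
  by rewrite natr_powRD //; congr powR; rewrite /e -natr1; ring.
by rewrite le_eqVlt; apply/predU1P; left; ring.
Qed.

Hypothesis t_lt_s : (t.+2 <= s)%N.

Let d : R := 2 * t.+1%:R / s%:R.
Let h (k : nat) : R := k%:R `^ (- d).
Let d_ge0 : 0 <= d. Proof. by rewrite /d mulr_ge0 ?invr_ge0 ?ler0n. Qed.
Let h_ge0 k : 0 <= h k. Proof. exact: powR_ge0. Qed.

(* Either the slack z - a.x is at least z/2, or a.x > z/2 and then the
   largest coordinate is at least z/(2A). *)
Lemma S2_term_le z (x : {ffun 'I_t.+1 -> 'I_z.+1}) : (wsum a x < z)%N ->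
  \prod_i f (x i) * h (z - wsum a x)%N <=
  (z%:R / 2) `^ (- d) * \prod_i f (x i) +
  (z%:R / (2 * A)%N%:R) `^ e * \sum_j h (z - wsum a x)%N * \prod_(i | i != j) f (x i).
Proof.
move=> wz; have z_gt0 : (0 < z)%N by apply: leq_ltn_trans wz.
have prod_ge0 : 0 <= \prod_i f (x i) by rewrite prodr_ge0.
have [slack_large|slack_small] := leqP z (2 * (z - wsum a x)).
  rewrite mulrC -[X in X <= _]addr0; apply: lerD.
    rewrite ler_wpM2r // le0_ger_powR ?oppr_le0 ?divr_gt0 ?ltr0n //.
    by rewrite ler_pdivrMr // -[2]/(2%:R) -natrM ler_nat mulnC.
  by rewrite mulr_ge0 ?powR_ge0 ?sumr_ge0 // => j _; rewrite mulr_ge0 ?prodr_ge0.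
rewrite -[X in X <= _]add0r; apply: lerD; first by rewrite mulr_ge0 ?powR_ge0.
rewrite -big_distrr /= mulrCA [leLHS]mulrC ler_wpM2l //.
apply: prod_powR_le_max; rewrite ?divr_gt0 ?ltr0n ?muln_gt0 //.
rewrite natrM invfM mulrA mulfVK ?pnatr_eq0 -?lt0n // ler_pdivrMr // -[2]/(2%:R) -natrM ler_nat.
lia.
Qed.

Let sum_h_ge0 z : 0 <= \sum_(k < z.+1) h k.
Proof. by apply: sumr_ge0 => k _; exact: h_ge0. Qed.

Let sum_h_le z : (0 < z)%N ->
  \sum_(k < z.+1) h k <= z%:R `^ (1 - t.+2%:R / s%:R) * (1 + ln z%:R).
Proof.
have s_pos : (0 : R) < s%:R by rewrite ltr0n.
apply: sum_powR_le_ln.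
- by rewrite ler_pdivrMr // mul1r ler_nat.
- by rewrite /d ler_pM2r ?invr_gt0 // -natrM ler_nat; lia.
- by rewrite /d mulf_neq0 ?invr_eq0 ?pnatr_eq0 // -lt0n.
Qed.

Lemma S2_free_le z (P : pred {ffun 'I_t.+1 -> 'I_z.+1}) : (4 <= z)%N ->
  (z%:R / 2) `^ (- d) * \sum_(x | P x) \prod_i f (x i) <=
  2^-1 `^ (- d) * s%:R ^+ t.+1 * (z%:R `^ (- s%:R^-1) * ln z%:R).
Proof.
move=> z_ge4; have z_gt0 : (0 < z)%N by apply: leq_trans z_ge4.
apply: le_trans (ler_wpM2l (powR_ge0 _ _) (le_trans (sum_prod_le P f f_ge0)
  (lerXn2r _ _ _ (sum_f_le z)))) _; rewrite ?nnegrE ?sum_f_ge0 ?mulr_ge0 ?powR_ge0 //.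
rewrite powRM ?invr_ge0 ?ler0n // exprMn exprn_powR.
rewrite [leLHS](_ : _ = 2^-1 `^ (- d) * s%:R ^+ t.+1 *
  (z%:R `^ (- d) * z%:R `^ (s%:R^-1 * t.+1%:R))); last by ring.
rewrite ler_wpM2l ?mulr_ge0 ?powR_ge0 ?exprn_ge0 ?ler0n // natr_powRD //.
rewrite -[leLHS]mulr1 ler_pM ?powR_ge0 ?ln_natr_ge1 // ler_powR ?ler1n //.
rewrite [leLHS](_ : _ = - (t.+1%:R * s%:R^-1)); last by rewrite /d; ring.
by rewrite lerN2 ler_peMl ?invr_ge0 ?ler0n ?ler1n.
Qed.

Lemma S2_slack_le z (P : pred {ffun 'I_t.+1 -> 'I_z.+1}) : (4 <= z)%N ->
  (forall x, P x -> wsum a x <= z)%N ->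
  (z%:R / (2 * A)%N%:R) `^ e *
    \sum_(x | P x) \sum_j h (z - wsum a x)%N * \prod_(i | i != j) f (x i) <=
  2 * t.+1%:R * (2 * A)%N%:R^-1 `^ e * s%:R ^+ t * (z%:R `^ (- s%:R^-1) * ln z%:R).
Proof.
move=> z_ge4 Pz; have z_gt0 : (0 < z)%N by apply: leq_trans z_ge4.
apply: le_trans (ler_wpM2l (powR_ge0 _ _) (sum_slack_le a_gt0 P f h Pz f_ge0 h_ge0)) _.
apply: le_trans (ler_wpM2l (powR_ge0 _ _) (ler_wpM2l (ler0n _ _)
  (ler_pM (sum_h_ge0 z) _ (sum_h_le z z_gt0) (lerXn2r _ _ _ (sum_f_le z))))) _;
  rewrite ?nnegrE ?sum_f_ge0 ?exprn_ge0 ?mulr_ge0 ?powR_ge0 //.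
rewrite powRM ?invr_ge0 ?ler0n // exprMn exprn_powR.
rewrite [leLHS](_ : _ = t.+1%:R * (2 * A)%N%:R^-1 `^ e * s%:R ^+ t *
  (z%:R `^ e * (z%:R `^ (1 - t.+2%:R / s%:R) * z%:R `^ (s%:R^-1 * t%:R))) * (1 + ln z%:R));
  last by ring.
rewrite !natr_powRD // [X in z%:R `^ X](_ : _ = - s%:R^-1); last first.
  by rewrite /e -[t.+2%:R]natr1 -[t.+1%:R]natr1; ring.
rewrite [leRHS](_ : _ = t.+1%:R * (2 * A)%N%:R^-1 `^ e * s%:R ^+ t *
  z%:R `^ (- s%:R^-1) * (2 * ln z%:R)); last by ring.
have L_ge1 : 1 <= ln (z%:R : R) by exact: ln_natr_ge1.
by rewrite ler_wpM2l ?mulr_ge0 ?powR_ge0 ?exprn_ge0 ?ler0n //; lra.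
Qed.

Lemma S2_le z : (4 <= z)%N ->
  @S2 R s t.+1 a z <=
  (2^-1 `^ (- d) * s%:R ^+ t.+1 + 2 * t.+1%:R * (2 * A)%N%:R^-1 `^ e * s%:R ^+ t) *
  (z%:R `^ (- s%:R^-1) * ln z%:R).
Proof.
move=> z_ge4.
pose P (x : {ffun 'I_t.+1 -> 'I_z.+1}) := [forall i, 0 < x i]%N && (wsum a x < z)%N.
rewrite /S2 (eq_bigr (fun x : {ffun 'I_t.+1 -> 'I_z.+1} =>
    \prod_i f (x i) * h (z - wsum a x)%N)); last first.
  move=> x /andP[_ wz]; rewrite prod_powR => [|i _]; last exact: ler0n.
  by rewrite /h natrB // ltnW.
apply: le_trans (ler_sum _ (fun x (Px : P x) => @S2_term_le z x (proj2 (andP Px)))) _.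
rewrite big_split /= -!mulr_sumr mulrDl.
apply: lerD; first exact: S2_free_le.
by apply: S2_slack_le => // x /andP[_ /ltnW].
Qed.
End Bounds.

Theorem lemma1 (R : realType) (s t : nat) (a : 'I_t -> nat) :
  (2 <= s)%N -> (1 <= t)%N -> (t <= s - 1)%N -> (forall i, (0 < a i)%N) ->
  (exists C : R, exists N : nat, 0 < C /\
     forall z : nat, (N <= z)%N ->
       @S1 R s t a z <= C * (z%:R : R) `^ (-1 + t%:R / s%:R)) /\
  (exists C : R, exists N : nat, 0 < C /\
     forall z : nat, (N <= z)%N ->
       @S2 R s t a z <= C * ((z%:R : R) `^ (- s%:R^-1) * ln (z%:R : R))).
Proof.
case: t a => [//|t] a s_ge2 _ t_le a_gt0.
have t_lt_s : (t.+2 <= s)%N by lia.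
have A_gt0 : (0 < \sum_i a i)%N by rewrite (bigD1 ord0) //= ltn_addr.
split; eexists.
- exists 1%N; split; last by move=> z; exact: S1_le.
  by rewrite !mulr_gt0 ?powR_gt0 ?invr_gt0 ?exprn_gt0 ?ltr0n ?(ltnW s_ge2).
- exists 4%N; split; last by move=> z; exact: S2_le.
  by rewrite addr_gt0 ?mulr_gt0 ?powR_gt0 ?invr_gt0 ?exprn_gt0 ?ltr0n ?muln_gt0 ?A_gt0 ?(ltnW s_ge2).
Qed.
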